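(* Let $K$ be a connected 4-regular simple graph with an odd number of vertices, let $v,w$ be adjacent vertices of $K$ having exactly one common neighbour $c$, let the neighbours of $w$ be $v,a,b,c$ and the neighbours of $v$ be $w,c,d,e$, and let $S=K-\{v,w\}$. There is a fixed-point free involution on $\mathcal{S}_{\{a,b,c\},\{d,e\}}\cup\mathcal{S}_{\{a,b\},\{c,d,e\}}$, and thus $s_{\{a,b,c\},\{d,e\}}+s_{\{a,b\},\{c,d,e\}}\equiv 0\pmod 2$.
   Context: A spanning 2-forest is a spanning forest with exactly two trees (a tree may be a single vertex). For a bipartition $P=\{P_1,P_2\}$ of a subset of $V(S)$, $\mathcal{S}_P$ is the set of bipartitions of $E(S)$ such that one part is the edge set of a spanning tree of $S$ and the other is the edge set of a spanning 2-forest of $S$ with one tree containing all vertices of $P_1$ and the other containing all vertices of $P_2$; $s_P=|\mathcal{S}_P|$. *)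

From mathcomp Require Import all_boot.
From mathcomp Require Import boolp.
Set Implicit Arguments. Unset Strict Implicit. Unset Printing Implicit Defensive.

Section Graphs.
Variable V : finType.

Definition simple_graph (adj : rel V) : Prop :=
  symmetric adj /\ irreflexive adj.

Definition nbhd (adj : rel V) (x : V) : {set V} := [set y | adj x y].

Definition regular4 (adj : rel V) : Prop := forall x, #|nbhd adj x| = 4.

Definition graph_connected (adj : rel V) : Prop := forall x y, connect adj x y.

Definition induced_edges (adj : rel V) (U : {set V}) : {set {set V}} :=
  [set e : {set V} | [exists x, exists y,
     [&& x \in U, y \in U, adj x y & e == [set x; y]]]].

Definition edge_rel (F : {set {set V}}) : rel V := fun x y => [set x; y] \in F.

Definition has_cycle (F : {set {set V}}) : Prop :=
  exists s : seq V, [/\ uniq s, 3 <= size s & cycle (edge_rel F) s].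

Definition acyclic (F : {set {set V}}) : Prop := ~ has_cycle F.

Definition spanning_tree (U : {set V}) (E T : {set {set V}}) : Prop :=
  [/\ T \subset E, acyclic T &
      forall x y, x \in U -> y \in U -> connect (edge_rel T) x y].

Definition spanning_2forest_sep (U : {set V}) (E F : {set {set V}})
    (P1 P2 : {set V}) : Prop :=
  [/\ F \subset E, acyclic F &
      (exists x y, [/\ x \in U, y \in U, ~~ connect (edge_rel F) x y &
          forall z, z \in U -> connect (edge_rel F) x z \/ connect (edge_rel F) y z])] /\
  [/\ (forall x y, x \in P1 -> y \in P1 -> connect (edge_rel F) x y),
      (forall x y, x \in P2 -> y \in P2 -> connect (edge_rel F) x y) &
      (forall x y, x \in P1 -> y \in P2 -> ~~ connect (edge_rel F) x y)].

(* The bipartition {T, E \ T} of E is represented by its spanning-tree part T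
   (tree and 2-forest parts have different sizes, so this is a bijection). *)
Definition calS (U : {set V}) (E : {set {set V}}) (P1 P2 : {set V})
    : {set {set {set V}}} :=
  [set T : {set {set V}} | `[< spanning_tree U E T /\
                               spanning_2forest_sep U E (E :\: T) P1 P2 >]].

End Graphs.

From mathcomp Require Import all_boot.
From mathcomp Require Import boolp.
Set Implicit Arguments. Unset Strict Implicit. Unset Printing Implicit Defensive.

(* In S = K - {v, w} the vertex c has exactly two neighbours x and y.  If E(S)
   is split into a spanning tree T and a spanning 2-forest F, then c has an edge
   in T (T spans) and an edge in F (the tree of F through c also contains a or d),
   so c is a leaf of both, T containing one of cx, cy and F the other.
   Exchanging these two edges re-hangs the leaf c on the other neighbour in both
   T and F, which leaves the connectivity among all other vertices unchanged:
   T stays a spanning tree and F a spanning 2-forest separating {a, b} from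
   {d, e}, and only c may change trees.  So the exchange is a fixed-point-free
   involution on S_{abc,de} ∪ S_{ab,cde}, which is exactly the set of such
   partitions whose forest separates {a, b} from {d, e}. *)

Section SetFacts.
Variable T : finType.
Implicit Types (A B E : {set T}) (x y u w : T).

Lemma eq_set2 x y u w :
  ([set x; y] == [set u; w]) = (x == u) && (y == w) || (x == w) && (y == u).
Proof.
apply/eqP/idP => [xy_uw|/orP[]/andP[/eqP-> /eqP->] //]; last exact: setUC.
have: [/\ x \in [set u; w], y \in [set u; w], u \in [set x; y] & w \in [set x; y]].
  by split; [rewrite -xy_uw|rewrite -xy_uw|rewrite xy_uw|rewrite xy_uw];
    rewrite !inE eqxx ?orbT.
rewrite !inE => -[]; do ![case/orP=> /eqP ?; subst] => //.
all: by rewrite !eqxx ?orbT.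
Qed.

Lemma card4_uniq x y u w : #|[set x; y; u; w]| = 4 -> uniq [:: x; y; u; w].
Proof.
move=> card4; apply/card_uniqP; rewrite /= -card4; apply: eq_card => z.
by rewrite !inE !orbA.
Qed.

Lemma setDU1D1 E A x y : x \in E -> x \in A -> y \notin A ->
  E :\: (y |: A :\ x) = x |: (E :\: A) :\ y.
Proof.
move=> xE xA yA; apply/setP => z; rewrite !inE.
have [->|zx] := eqVneq z x; last by rewrite /= negb_or andbA.
by rewrite xE andbT; case: eqVneq xA yA => [->->|].
Qed.

Definition symdiff A B := A :\: B :|: B :\: A.

Lemma symdiffK A B : symdiff (symdiff A B) B = A.
Proof. by apply/setP => z; rewrite !inE; case: (z \in A); case: (z \in B). Qed.

Lemma symdiff_eq_id A B : (symdiff A B == A) = (B == set0).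
Proof.
apply/eqP/eqP => [/setP AB|->]; last by rewrite /symdiff setD0 set0D setU0.
by apply/setP => z; move: (AB z); rewrite !inE; case: (z \in A); case: (z \in B).
Qed.

Lemma symdiff_set2 A x y :
  x \in A -> y \notin A -> symdiff A [set x; y] = y |: A :\ x.
Proof.
move=> xA yA; apply/setP => z; rewrite !inE.
have [->|zx] := eqVneq z x; first by rewrite xA; case: eqVneq xA yA => [->->|].
by have [->|] := eqVneq z y; rewrite /= ?andbF ?orbF ?andbT // yA.
Qed.

(* Pair each element with its image and keep the one of smaller rank. *)
Lemma fpf_involution_card_even A (f : T -> T) :
  {in A, forall x, [/\ f x \in A, f (f x) = x & f x != x]} -> ~~ odd #|A|.
Proof.
move=> f_inv; pose B := [set x in A | enum_rank x < enum_rank (f x)].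
have fK : {in A, involutive f} by move=> x /f_inv[].
have A_B : A = B :|: f @: B.
  apply/setP => x; rewrite !inE; apply/idP/idP => [xA|].
    have [fxA ffx fxx] := f_inv x xA; rewrite xA /=.
    case: ltngtP => [//|lt|/val_inj/enum_rank_inj x_fx] /=; last first.
      by rewrite -x_fx eqxx in fxx.
    by apply/imsetP; exists (f x); rewrite ?inE ?fxA ?ffx.
  by case/orP=> [/andP[] //|/imsetP[y /setIdP[yA _] ->]]; case: (f_inv y yA).
have B_fB : B :&: f @: B = set0.
  apply/setP => x; rewrite !inE; apply/negP => /andP[/andP[_ lt_x]].
  case/imsetP=> y /setIdP[yA lt_y] xfy; move: lt_x; rewrite xfy fK //.
  by move/(ltn_trans lt_y); rewrite ltnn.
have /card_in_imset card_fB : {in B &, injective f}.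
  by move=> x y /setIdP[xA _] /setIdP[yA _] fxy; rewrite -(fK x) // fxy fK.
by rewrite A_B -[#|_|]addn0 -(cards0 T) -B_fB cardsUI card_fB addnn odd_double.
Qed.

End SetFacts.

Section PendantEdge.
Variable T : finType.
Implicit Types (F G H : {set {set T}}) (c p q u : T).

Lemma edge_rel_sym F : symmetric (edge_rel F).
Proof. by move=> x y; rewrite /edge_rel setUC. Qed.

Lemma connect_edge_rel_sym F : connect_sym (edge_rel F).
Proof. exact/sym_connect_sym/edge_rel_sym. Qed.

Lemma edge_relU1 F c p u u' :
  edge_rel ([set c; p] |: F) u u' =
  (u == c) && (u' == p) || (u == p) && (u' == c) || edge_rel F u u'.
Proof. by rewrite /edge_rel in_setU1 eq_set2. Qed.

Lemma acyclicS F G : F \subset G -> acyclic G -> acyclic F.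
Proof.
move=> /subsetP FG acG [s [s_uniq s3 s_cycle]]; apply: acG; exists s; split=> //.
by apply: sub_cycle s_cycle => u u' /FG.
Qed.

Lemma edge_of_connect F c u : connect (edge_rel F) c u -> u != c ->
  exists u', [set c; u'] \in F.
Proof.
by case/connectP=> -[_ ->|u' s /= /andP[cu' _] _ _]; [rewrite eqxx | exists u'].
Qed.

Definition retract c p u := if u == c then p else u.

Lemma retract_id c p u : u != c -> retract c p u = u.
Proof. by rewrite /retract => /negbTE->. Qed.

Lemma retract_in (A : {set T}) c p u : p \in A -> u \in A -> retract c p u \in A.
Proof. by rewrite /retract; case: eqP. Qed.

Variables (H : {set {set T}}) (c p : T).
Hypothesis H_c : forall u, [set c; u] \notin H.

Lemma connect_pendant u u' :
  connect (edge_rel ([set c; p] |: H)) u u' =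
  connect (edge_rel H) (retract c p u) (retract c p u').
Proof.
set G := [set c; p] |: H.
have retract_c : retract c p c = p by rewrite /retract eqxx.
have retract_p : retract c p p = p by rewrite /retract; case: eqP.
have H_ne_c z z' : edge_rel H z z' -> z != c.
  by apply: contraTneq => ->; apply: H_c.
have G_retract z z' :
    edge_rel G z z' -> connect (edge_rel H) (retract c p z) (retract c p z').
  rewrite edge_relU1 => /orP[/orP[]/andP[/eqP-> /eqP->]|Hzz'].
  - by rewrite retract_c retract_p.
  - by rewrite retract_c retract_p.
  have z'_ne_c : z' != c by apply: (H_ne_c _ z); rewrite edge_rel_sym.
  by rewrite !retract_id ?(H_ne_c _ _ Hzz') ?connect1.
apply/idP/idP => [|conn_r].
  pose reach := [pred z | connect (edge_rel H) (retract c p u) (retract c p z)].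
  have reach_closed : closed (edge_rel G) reach.
    apply: (intro_closed (connect_edge_rel_sym G)) => z z' /G_retract.
    by rewrite !inE => /[swap]; apply: connect_trans.
  by move/(closed_connect reach_closed); rewrite !inE connect0 => <-.
have connect_retract z : connect (edge_rel G) z (retract c p z).
  rewrite /retract; case: eqP => [->|_]; last exact: connect0.
  by apply: connect1; rewrite /edge_rel setU11.
have H_G : subrel (connect (edge_rel H)) (connect (edge_rel G)).
  by apply: connect_sub => z z' Hzz'; apply: connect1; rewrite /edge_rel setU1r.
apply: connect_trans (connect_retract u) (connect_trans (H_G _ _ conn_r) _).
by rewrite connect_edge_rel_sym.
Qed.

Lemma acyclic_pendant : acyclic H -> acyclic ([set c; p] |: H).
Proof.
set G := [set c; p] |: H.
move=> acH [s [s_uniq s3 s_cycle]].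
have G_c u : edge_rel G c u -> u = p.
  rewrite edge_relU1 eqxx /= [edge_rel H c u](negbTE (H_c u)) orbF.
  by case/orP=> [/eqP|/andP[/eqP-> /eqP]].
have [c_s|c_notin_s] := boolP (c \in s).
  have [i r def_s] := rot_to c_s.
  (* c would have two distinct neighbours on the cycle, both equal to p. *)
  have : [/\ uniq (c :: r), 2 < size (c :: r) & cycle (edge_rel G) (c :: r)].
    by rewrite -def_s rot_uniq size_rot rot_cycle.
  case: r {def_s} => [|u [|u' r]] [] //= /andP[_ /andP[u_notin _]] _.
  rewrite rcons_path => /and3P[/G_c u_p _ /andP[_]].
  rewrite edge_rel_sym => /G_c last_p.
  by move: u_notin; rewrite u_p -last_p mem_last.
apply: acH; exists s; split => //.
apply: (@sub_in_cycle _ (predC1 c)) s_cycle => [u u' /= u_c u'_c|].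
  by rewrite edge_relU1 (negbTE u_c) (negbTE u'_c) !andbF.
by apply/allP => z z_s; apply: contraNneq c_notin_s => <-.
Qed.

End PendantEdge.

Definition relink (T : finType) (G : {set {set T}}) (c p q : T) :=
  [set c; q] |: G :\ [set c; p].

Lemma relink_subset (T : finType) (E G : {set {set T}}) c p q :
  G \subset E -> [set c; q] \in E -> relink G c p q \subset E.
Proof.
by move=> GE cqE; rewrite subUset sub1set cqE (subset_trans (subsetDl _ _) GE).
Qed.

Section Relink.
Variables (T : finType) (G : {set {set T}}) (c p q : T).
Hypotheses (G_cp : [set c; p] \in G) (G_c : forall u, [set c; u] \in G -> u = p).

Let Gcp_c u : [set c; u] \notin G :\ [set c; p].
Proof. by rewrite in_setD1 negb_and negbK orbC -implybE; apply/implyP => /G_c->. Qed.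

Lemma connect_relink u u' : q != c ->
  connect (edge_rel (relink G c p q)) u u' =
  connect (edge_rel G) (retract c q u) (retract c q u').
Proof.
move=> q_c; rewrite connect_pendant // -{2}(setD1K G_cp) connect_pendant //.
have retract_ne_c z : retract c q z != c by rewrite /retract; case: ifP => // /negbT.
by rewrite (retract_id p (retract_ne_c u)) (retract_id p (retract_ne_c u')).
Qed.

Lemma acyclic_relink : acyclic G -> acyclic (relink G c p q).
Proof.
by move=> acG; apply: (acyclic_pendant Gcp_c); apply: acyclicS acG; apply: subsetDl.
Qed.

End Relink.

Section SpanningForests.
Variables (V : finType) (U : {set V}) (E : {set {set V}}).
Implicit Types (F T : {set {set V}}).

Local Notation sep := (spanning_2forest_sep U E).

Lemma spanning_2forest_sepC F (P1 P2 : {set V}) : sep F P1 P2 -> sep F P2 P1.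
Proof.
have csym := connect_edge_rel_sym F.
case=> [[FE acF [x [y [xU yU nxy cover]]]] [P1c P2c P12]].
split; split => //; last by move=> u u' u2 u1; rewrite csym; apply: P12.
exists y, x; split => //; first by rewrite csym.
by move=> z /cover[]; [right|left].
Qed.

Lemma spanning_2forest_sepS F (P1 P2 Q1 Q2 : {set V}) :
  Q1 \subset P1 -> Q2 \subset P2 -> sep F P1 P2 -> sep F Q1 Q2.
Proof.
move=> /subsetP Q1P1 /subsetP Q2P2 [Fsp [P1c P2c P12]]; split=> //.
split=> [u u' /Q1P1 + /Q1P1|u u' /Q2P2 + /Q2P2|u u' /Q1P1 + /Q2P2].
- exact: P1c.
- exact: P2c.
- exact: P12.
Qed.

Lemma spanning_2forest_sep_cover F (P1 P2 : {set V}) a d :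
  sep F P1 P2 -> a \in P1 -> d \in P2 -> a \in U -> d \in U ->
  {in U, forall z, connect (edge_rel F) a z \/ connect (edge_rel F) d z}.
Proof.
case=> [[_ _ [x [y [xU yU _ cover]]]] [_ _ P12]] aP1 dP2 aU dU z zU.
have not_ad := P12 a d aP1 dP2.
have join u v v' : connect (edge_rel F) u v -> connect (edge_rel F) u v' ->
    connect (edge_rel F) v v'.
  by rewrite connect_edge_rel_sym; apply: connect_trans.
case: (cover a aU) => xa; case: (cover d dU) => xd; case: (cover z zU) => xz;
  first [by left; apply: join xa xz | by right; apply: join xd xz
        | by case/negP: not_ad; apply: join xa xd].
Qed.

Lemma spanning_2forest_sep_setU1l F (P1 P2 : {set V}) a c :
  sep F P1 P2 -> a \in P1 -> connect (edge_rel F) a c -> sep F (c |: P1) P2.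
Proof.
have csym := connect_edge_rel_sym F.
case=> [Fsp [P1c P2c P12]] aP1 ac; split=> //.
have a_cP1 u : u \in c |: P1 -> connect (edge_rel F) a u.
  by case/setU1P => [->|/(P1c a _ aP1)].
split=> // [u u' /a_cP1 au /a_cP1 au'|u u' /a_cP1 au u'P2].
  by rewrite csym in au; apply: connect_trans au au'.
by apply: contra (P12 a u' aP1 u'P2); apply: connect_trans au.
Qed.

Lemma spanning_2forest_sep_setU1 F (P1 P2 : {set V}) a d c :
  sep F P1 P2 -> a \in P1 -> d \in P2 -> a \in U -> d \in U -> c \in U ->
  sep F (c |: P1) P2 \/ sep F P1 (c |: P2).
Proof.
move=> sepF aP1 dP2 aU dU cU.
case: (spanning_2forest_sep_cover sepF aP1 dP2 aU dU cU) => [ac|dc].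
  by left; apply: spanning_2forest_sep_setU1l ac.
right; apply: spanning_2forest_sepC.
exact: spanning_2forest_sep_setU1l (spanning_2forest_sepC sepF) dP2 dc.
Qed.

Section Transfer.
Variables (r : V -> V) (F F' : {set {set V}}).
Hypotheses (F'E : F' \subset E) (acF' : acyclic F') (r_U : {in U, forall z, r z \in U}).
Hypothesis connect_r :
  forall z z', connect (edge_rel F') z z' = connect (edge_rel F) (r z) (r z').

Lemma spanning_tree_transfer : spanning_tree U E F -> spanning_tree U E F'.
Proof. by case=> _ _ Fconn; split=> // z z' zU z'U; rewrite connect_r Fconn ?r_U. Qed.

Lemma spanning_2forest_sep_transfer (P1 P2 : {set V}) a d :
  a \in P1 -> d \in P2 -> a \in U -> d \in U -> {in P1 :|: P2, forall z, r z = z} ->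
  sep F P1 P2 -> sep F' P1 P2.
Proof.
move=> aP1 dP2 aU dU r_P sepF.
have cover := spanning_2forest_sep_cover sepF aP1 dP2 aU dU.
case: sepF => [_ [P1c P2c P12]].
have inP1 u : u \in P1 -> u \in P1 :|: P2 by move=> uP1; rewrite inE uP1.
have inP2 u : u \in P2 -> u \in P1 :|: P2 by move=> uP2; rewrite inE uP2 orbT.
have connect_P u u' : u \in P1 :|: P2 -> u' \in P1 :|: P2 ->
    connect (edge_rel F') u u' = connect (edge_rel F) u u'.
  by move=> uP u'P; rewrite connect_r !r_P.
split; split=> //.
- exists a, d; split=> //.
    by rewrite connect_P ?(inP1 a) ?(inP2 d) //; apply: P12.
  move=> z zU; rewrite !connect_r (r_P a (inP1 a aP1)) (r_P d (inP2 d dP2)).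
  exact/cover/r_U.
- by move=> u u' uP1 u'P1; rewrite connect_P ?(inP1 u) ?(inP1 u') //; apply: P1c.
- by move=> u u' uP2 u'P2; rewrite connect_P ?(inP2 u) ?(inP2 u') //; apply: P2c.
- by move=> u u' uP1 u'P2; rewrite connect_P ?(inP1 u) ?(inP2 u') //; apply: P12.
Qed.

End Transfer.

Lemma calSP (P1 P2 : {set V}) T :
  reflect (spanning_tree U E T /\ sep (E :\: T) P1 P2) (T \in calS U E P1 P2).
Proof. by rewrite inE; apply: asboolP. Qed.

Lemma calS_setU1 (P1 P2 : {set V}) a d c :
  a \in P1 -> d \in P2 -> a \in U -> d \in U -> c \in U ->
  calS U E (c |: P1) P2 :|: calS U E P1 (c |: P2) = calS U E P1 P2.
Proof.
move=> aP1 dP2 aU dU cU; apply/setP => T; apply/idP/calSP.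
  by case/setUP => /calSP[Tsp sepT]; split=> //;
    apply: spanning_2forest_sepS sepT; rewrite ?subsetUr.
case=> Tsp sepT; rewrite inE.
by case: (spanning_2forest_sep_setU1 sepT aP1 dP2 aU dU cU) => sep';
  apply/orP; [left|right]; apply/calSP.
Qed.

Lemma calS_setU1I (P1 P2 : {set V}) c d :
  d \in P2 -> calS U E (c |: P1) P2 :&: calS U E P1 (c |: P2) = set0.
Proof.
move=> dP2; apply/setP => T; rewrite inE in_set0.
apply/andP => -[/calSP[_ [_ [_ _ P12]]] /calSP[_ [_ [_ P2c _]]]].
by case/negP: (P12 c d (setU11 _ _) dP2); apply: P2c; rewrite ?setU11 ?setU1r.
Qed.

Section SwapAtDegreeTwoVertex.
Variables (P1 P2 : {set V}) (a d c x y : V).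
Hypotheses (aP1 : a \in P1) (dP2 : d \in P2) (c_P : c \notin P1 :|: P2).
Hypotheses (aU : a \in U) (dU : d \in U) (cU : c \in U) (xU : x \in U) (yU : y \in U).
Hypotheses (x_c : x != c) (y_c : y != c).
Hypothesis E_c : forall u, ([set c; u] \in E) = (u \in [set x; y]).

Let ne_c u : u \in P1 :|: P2 -> u != c.
Proof. by apply: contraTneq => ->. Qed.

Let c_edge F u : u \in P1 :|: P2 -> connect (edge_rel F) u c ->
  exists u', [set c; u'] \in F.
Proof.
by move=> /ne_c u_c; rewrite connect_edge_rel_sym => /edge_of_connect; apply.
Qed.

Lemma relink_calS p q T : [set p; q] = [set x; y] ->
  [set c; p] \in T -> [set c; q] \notin T -> T \in calS U E P1 P2 ->
  relink T c p q \in calS U E P1 P2.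
Proof.
move=> pq_xy cpT cqT /calSP[Tsp sepT].
have [TE acT _] := Tsp; have [[FE acF _] _] := sepT.
have E_pq u : ([set c; u] \in E) = (u \in [set p; q]) by rewrite E_c pq_xy.
have /andP[pU p_c] : (p \in U) && (p != c).
  by move: (set21 p q); rewrite pq_xy => /set2P[]->; rewrite ?xU ?x_c ?yU ?y_c.
have /andP[qU q_c] : (q \in U) && (q != c).
  by move: (set22 p q); rewrite pq_xy => /set2P[]->; rewrite ?xU ?x_c ?yU ?y_c.
have cpE : [set c; p] \in E by rewrite E_pq set21.
have cqE : [set c; q] \in E by rewrite E_pq set22.
have cqF : [set c; q] \in E :\: T by rewrite inE cqT cqE.
have T_c u : [set c; u] \in T -> u = p.
  move=> cuT; have := subsetP TE _ cuT; rewrite E_pq => /set2P[//|uq].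
  by move: cqT; rewrite -uq cuT.
have F_c u : [set c; u] \in E :\: T -> u = q.
  by rewrite inE E_pq => /andP[cuT /set2P[up|//]]; move: cuT; rewrite up cpT.
apply/calSP; split.
  apply: (spanning_tree_transfer (r := retract c q) (F := T)) Tsp.
  - exact: relink_subset.
  - exact: acyclic_relink T_c acT.
  - by move=> z; apply: retract_in.
  - by move=> z z'; apply: connect_relink.
rewrite setDU1D1 //.
apply: (spanning_2forest_sep_transfer (r := retract c p) (F := E :\: T)) sepT.
- exact: relink_subset.
- exact: acyclic_relink F_c acF.
- by move=> z; apply: retract_in.
- by move=> z z'; apply: connect_relink.
- exact: aP1.
- exact: dP2.
- exact: aU.
- exact: dU.
- by move=> z /ne_c; apply: retract_id.
Qed.

Lemma calS_symdiff T : T \in calS U E P1 P2 ->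
  symdiff T [set [set c; x]; [set c; y]] \in calS U E P1 P2.
Proof.
move=> TS; have /calSP[[TE _ Tconn] sepT] := TS.
have aP : a \in P1 :|: P2 by rewrite inE aP1.
have dP : d \in P1 :|: P2 by rewrite inE dP2 orbT.
have [u cuT] : exists u, [set c; u] \in T by apply: (c_edge aP); rewrite Tconn.
have [u' cu'F] : exists u', [set c; u'] \in E :\: T.
  have := spanning_2forest_sep_cover sepT aP1 dP2 aU dU cU.
  by case=> [/(c_edge aP)|/(c_edge dP)].
have [xT|xT] := boolP ([set c; x] \in T); have [yT|yT] := boolP ([set c; y] \in T).
- move: cu'F; rewrite inE E_c => /andP[cu'T /set2P[]u_eq].
  + by rewrite u_eq xT in cu'T.
  + by rewrite u_eq yT in cu'T.
- by rewrite symdiff_set2 //; apply: relink_calS.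
- rewrite setUC symdiff_set2 //; apply: relink_calS => //; exact: setUC.
- have := subsetP TE _ cuT; rewrite E_c => /set2P[] u_eq.
  + by move: xT; rewrite -u_eq cuT.
  + by move: yT; rewrite -u_eq cuT.
Qed.

Lemma calS_fpf_involution : exists f, {in calS U E P1 P2, forall T,
  [/\ f T \in calS U E P1 P2, f (f T) = T & f T != T]}.
Proof.
exists (fun T => symdiff T [set [set c; x]; [set c; y]]) => T TS; split.
- exact: calS_symdiff.
- exact: symdiffK.
- by rewrite symdiff_eq_id; apply/set0Pn; exists [set c; x]; rewrite set21.
Qed.

End SwapAtDegreeTwoVertex.

End SpanningForests.

Lemma mem_induced_edges (V : finType) (adj : rel V) (U : {set V}) x y :
  symmetric adj ->
  ([set x; y] \in induced_edges adj U) = [&& x \in U, y \in U & adj x y].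
Proof.
move=> adj_sym; rewrite inE; apply/existsP/idP => [[x' /existsP[y']]|/and3P[xU yU xy]].
  case/and4P=> x'U y'U x'y'; rewrite eq_set2 => /orP[]/andP[/eqP-> /eqP->].
    by rewrite x'U y'U x'y'.
  by rewrite x'U y'U adj_sym x'y'.
by exists x; apply/existsP; exists y; rewrite xU yU xy eqxx.
Qed.

Theorem lemma4p2 (V : finType) (adj : rel V) (v w a b c d e : V) :
  simple_graph adj ->
  graph_connected adj ->
  regular4 adj ->
  odd #|V| ->
  adj v w ->
  nbhd adj v :&: nbhd adj w = [set c] ->
  nbhd adj w = [set v; a; b; c] ->
  nbhd adj v = [set w; c; d; e] ->
  let U := ~: [set v; w] in
  let E := induced_edges adj U in
  let S1 := calS U E [set a; b; c] [set d; e] in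
  let S2 := calS U E [set a; b] [set c; d; e] in
  (exists f : {set {set V}} -> {set {set V}},
     forall T, T \in S1 :|: S2 ->
       [/\ f T \in S1 :|: S2, f (f T) = T & f T != T]) /\
  odd (#|S1| + #|S2|) = false.
Proof.
move=> [adj_sym adj_irr] _ reg4 _ vw _ Nw Nv U E S1 S2.
have /card4_uniq/= : #|[set v; a; b; c]| = 4 by rewrite -Nw.
have /card4_uniq/= : #|[set w; c; d; e]| = 4 by rewrite -Nv.
rewrite !inE !negb_or !andbT.
move=> /and3P[/and3P[w_c w_d _] /andP[c_d c_e] _].
move=> /and3P[/and3P[v_a _ v_c] /andP[_ a_c] b_c].
have adj_ne u u' : adj u u' -> u != u' by apply: contraTneq => ->; rewrite adj_irr.
have wN u : u \in [set v; a; b; c] -> adj w u by rewrite -Nw inE.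
have vN u : u \in [set w; c; d; e] -> adj v u by rewrite -Nv inE.
have inU u : (u \in U) = (u != v) && (u != w) by rewrite !inE negb_or.
have aU : a \in U by rewrite inU eq_sym v_a eq_sym adj_ne // wN // !inE eqxx ?orbT.
have dU : d \in U.
  by rewrite inU (eq_sym d w) w_d andbT eq_sym adj_ne // vN // !inE eqxx ?orbT.
have cU : c \in U by rewrite inU eq_sym v_c eq_sym w_c.
have [x [y [_ N_c]]] : exists x y, x != y /\ nbhd adj c :\: [set v; w] = [set x; y].
  apply/cards2P; rewrite cardsD (setIidPr _) ?reg4 ?cards2 ?adj_ne //.
  apply/subsetP => u; rewrite !inE => /orP[]/eqP->; rewrite adj_sym.
    by apply: vN; rewrite !inE eqxx orbT.
  by apply: wN; rewrite !inE eqxx orbT.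
have E_c u : ([set c; u] \in E) = (u \in [set x; y]).
  by rewrite -N_c mem_induced_edges // cU !inE.
have xy_U_c u : u \in [set x; y] -> (u \in U) && (u != c).
  by rewrite -E_c mem_induced_edges // => /and3P[_ -> /adj_ne]; rewrite eq_sym.
have /andP[xU x_c] := xy_U_c x (set21 x y).
have /andP[yU y_c] := xy_U_c y (set22 x y).
have c_P : c \notin [set a; b] :|: [set d; e].
  rewrite !inE (eq_sym c a) (eq_sym c b).
  by rewrite (negbTE a_c) (negbTE b_c) (negbTE c_d) (negbTE c_e).
have abc : [set a; b; c] = c |: [set a; b] by rewrite setUC.
have cde : [set c; d; e] = c |: [set d; e] by rewrite -setUA.
have S12 : S1 :|: S2 = calS U E [set a; b] [set d; e].
  by rewrite /S1 /S2 abc cde; apply: calS_setU1 (set21 a b) (set21 d e) aU dU cU.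
have S1S2 : S1 :&: S2 = set0 by rewrite /S1 /S2 abc cde; apply: calS_setU1I (set21 d e).
have [f f_inv] :=
  calS_fpf_involution (set21 a b) (set21 d e) c_P aU dU cU xU yU x_c y_c E_c.
rewrite S12; split; first by exists f.
rewrite -cardsUI S1S2 cards0 addn0 S12.
exact/negbTE/(fpf_involution_card_even f_inv).
Qed.
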